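(* Let $f:\mathbb{R}^n\to\mathbb{R}$ be continuously differentiable, let $s$ be an integer with $0<s<n$, and consider the problem (P): minimize $f(\mathbf{x})$ subject to $\|\mathbf{x}\|_0\le s$. If $\mathbf{x}^*\in C_s$ is a CW-minimum of (P), then $\mathbf{x}^*$ is a BF vector of (P).
   Context: $\|\mathbf{x}\|_0$ is the number of nonzero components of $\mathbf{x}$, $C_s=\{\mathbf{x}:\|\mathbf{x}\|_0\le s\}$, $I_1(\mathbf{x})=\{i:x_i\neq0\}$, $\mathbf{e}_i$ the $i$-th standard basis vector. A feasible $\mathbf{x}^*$ is a coordinate-wise (CW) minimum of (P) if either (Case I) $\|\mathbf{x}^*\|_0<s$ and $f(\mathbf{x}^* )=\min_{t\in\mathbb{R}}f(\mathbf{x}^*+t\mathbf{e}_i)$ for every $i$; or (Case II) $\|\mathbf{x}^*\|_0=s$ and $f(\mathbf{x}^* )\le\min_{t\in\mathbb{R}}f(\mathbf{x}^*-x_i^*\mathbf{e}_i+t\mathbf{e}_j)$ for every $i\in I_1(\mathbf{x}^* )$ and $j=1,\dots,n$. A vector $\mathbf{x}^*\in C_s$ is a basic feasible (BF) vector of (P) if: when $\|\mathbf{x}^*\|_0<s$, $\nabla f(\mathbf{x}^* )=0$; and when $\|\mathbf{x}^*\|_0=s$, $\nabla_i f(\mathbf{x}^* )=0$ for all $i\in I_1(\mathbf{x}^* )$. *)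

From HB Require Import structures.
From mathcomp Require Import all_boot all_order all_algebra.
From mathcomp Require Import all_classical all_reals all_analysis.
Set Implicit Arguments. Unset Strict Implicit. Unset Printing Implicit Defensive.
Import Order.TTheory GRing.Theory Num.Theory.
Import numFieldNormedType.Exports.
Local Open Scope ring_scope.

Section Defs.
Variables (R : realType) (n : nat).

Definition evec (i : 'I_n) : 'rV[R]_n := delta_mx 0 i.

Definition l0norm (x : 'rV[R]_n) : nat := #|[set i : 'I_n | x 0 i != 0]|.

Definition Cs (s : nat) : set 'rV[R]_n := [set x | (l0norm x <= s)%N].

Definition partial (f : 'rV[R]_n -> R) (i : 'I_n) (x : 'rV[R]_n) : R :=
  'D_(evec i) f x.

Definition C1 (f : 'rV[R]_n -> R) : Prop :=
  (forall x, differentiable f x) /\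
  (forall i, continuous (partial f i)).

Definition CW_min (f : 'rV[R]_n -> R) (s : nat) (x : 'rV[R]_n) : Prop :=
  Cs s x /\
  ( ((l0norm x < s)%N ->
      forall (i : 'I_n) (t : R), f x <= f (x + t *: evec i))
  /\ (l0norm x = s ->
      forall (i j : 'I_n), x 0 i != 0 ->
        forall t : R, f x <= f (x - x 0 i *: evec i + t *: evec j)) ).

Definition BF (f : 'rV[R]_n -> R) (s : nat) (x : 'rV[R]_n) : Prop :=
  Cs s x /\
  ( ((l0norm x < s)%N -> forall i : 'I_n, partial f i x = 0)
  /\ (l0norm x = s -> forall i : 'I_n, x 0 i != 0 -> partial f i x = 0) ).

End Defs.

From HB Require Import structures.
From mathcomp Require Import all_boot all_order all_algebra.
From mathcomp Require Import all_classical all_reals all_analysis.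
From mathcomp Require Import lra.
Import Order.TTheory GRing.Theory Num.Theory.
Import numFieldNormedType.Exports.
Local Open Scope ring_scope.

(* A coordinate-wise minimum minimizes [f] along every coordinate line through
   it that it is allowed to move on: in Case I every line [x + t e_i], in
   Case II the lines through a nonzero coordinate, obtained from the swap
   [x - x_i e_i + t e_j] with [j = i].  By Fermat's rule applied to the
   restriction of [f] to such a line, the corresponding partial derivative
   vanishes. *)

Section LineRestriction.
Variables (R : realType) (V : normedModType R).
Variables (f : V -> R) (x v : V).

Let g (t : R) : R := f (x + t *: v).

Lemma line_difference_quotientE (t : R) :
  (fun h : R => h^-1 *: ((g \o shift t) (h *: 1) - g t)) =
  (fun h : R => h^-1 *: ((f \o shift (x + t *: v)) (h *: v) - f (x + t *: v))).
Proof.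
apply: funext => h /=; rewrite /g /shift /= [h *: 1]mulr1 scalerDl.
by rewrite addrCA.
Qed.

Lemma derivable_line (t : R) :
  derivable f (x + t *: v) v -> derivable g t 1.
Proof. by rewrite /derivable line_difference_quotientE. Qed.

Lemma derive_lineE (t : R) : 'D_1 g t = 'D_v f (x + t *: v).
Proof. by rewrite /derive line_difference_quotientE. Qed.

Lemma derive_eq0_at_line_min :
  (forall t : R, derivable f (x + t *: v) v) ->
  (forall t : R, f x <= f (x + t *: v)) ->
  'D_v f x = 0.
Proof.
move=> fdrv xmin.
have g'0 : is_derive (0 : R) 1 g 0.
  apply: (@derive1_at_min _ g (-1) 1 0).
  - lra.
  - by move=> t _; exact: derivable_line.
  - by rewrite in_itv /=; apply/andP; split; lra.
  - by move=> t _; rewrite /g scale0r addr0; exact: xmin.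
by rewrite -[x]addr0 -[0 : V](scale0r v) -derive_lineE derive_val.
Qed.

End LineRestriction.

Lemma CW_min_support_line_min (R : realType) (n s : nat) (f : 'rV[R]_n -> R)
    (x : 'rV[R]_n) (i : 'I_n) :
  CW_min f s x -> l0norm x = s -> x 0 i != 0 ->
  forall t : R, f x <= f (x + t *: evec R i).
Proof.
move=> [_ [_ swap_min]] xs xi t.
have := swap_min xs i i xi (x 0 i + t).
by rewrite scalerDl addrA subrK.
Qed.

Theorem lemma2p5 (R : realType) (n s : nat) (f : 'rV[R]_n -> R)
  (hf : C1 f) (hs0 : (0 < s)%N) (hsn : (s < n)%N) (x : 'rV[R]_n) :
  x \in Cs s -> CW_min f s x -> BF f s x.
Proof.
move=> _ xCW; case: hf => fdiff _.
have fdrv (i : 'I_n) t : derivable f (x + t *: evec R i) (evec R i).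
  exact: diff_derivable.
have [xCs [line_min _]] := xCW.
split=> //; split=> [xs i | xs i xi]; apply: derive_eq0_at_line_min => //.
- exact: line_min.
- exact: CW_min_support_line_min xCW xs xi.
Qed.
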